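(* Assume (A1). For every constant $p>0$ there exists $u_0>0$ such that the integral equation \[ g(u)=\frac{\mu}{u^\gamma e^{-\alpha/u}}\int_0^u t^{\gamma-2}e^{-\alpha/t}\Big(p\,\bar F(t)+\int_0^t g(z)\bar F(t-z)\,dz\Big)dt,\qquad 0<u\le u_0, \] has a unique solution $g\in C([0,u_0])$, and this solution satisfies $g(0)=\lambda p/c$.
   Context: $F$ is the distribution function of a positive random variable (claim size), $\bar F=1-F$. Parameters: $\kappa\in(0,1]$, $a\in\mathbb{R}$, $r\ge0$, $\sigma>0$, $c>0$, $\lambda>0$, and $\gamma=\dfrac{2((a-r)\kappa+r)}{\kappa^2\sigma^2}$, $\alpha=\dfrac{2c}{\kappa^2\sigma^2}$, $\mu=\dfrac{2\lambda}{\kappa^2\sigma^2}$. Assumption (A1): $F(0)=0$. The value $g(0)$ of a continuous $g$ on $[0,u_0]$ is its limit as $u\downarrow0$. *)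

From Stdlib Require Import Reals.
From Coquelicot Require Import Coquelicot.
Open Scope R_scope.

Definition is_distribution_function (F : R -> R) : Prop :=
  (forall x y, x <= y -> F x <= F y) /\
  (forall x, filterlim F (at_right x) (locally (F x))) /\
  filterlim F (Rbar_locally m_infty) (locally 0) /\
  filterlim F (Rbar_locally p_infty) (locally 1).

Definition positive_rv_cdf (F : R -> R) : Prop :=
  is_distribution_function F /\ (forall x, x < 0 -> F x = 0).

Definition Fbar (F : R -> R) (x : R) : R := 1 - F x.

Definition continuous_on_closed (a b : R) (g : R -> R) : Prop :=
  forall x, a <= x <= b ->
    filterlim g (within (fun y => a <= y <= b) (locally x)) (locally (g x)).

Definition gamma_ (kappa a r sigma : R) : R :=
  2 * ((a - r) * kappa + r) / (kappa ^ 2 * sigma ^ 2).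
Definition alpha_ (kappa sigma c : R) : R := 2 * c / (kappa ^ 2 * sigma ^ 2).
Definition mu_ (kappa sigma lambda : R) : R := 2 * lambda / (kappa ^ 2 * sigma ^ 2).

Definition rhs (F : R -> R) (gam alp mu p : R) (g : R -> R) (u : R) : R :=
  mu / (Rpower u gam * exp (- alp / u)) *
  RInt (fun t => Rpower t (gam - 2) * exp (- alp / t) *
                 (p * Fbar F t + RInt (fun z => g z * Fbar F (t - z)) 0 t)) 0 u.

Definition solves (F : R -> R) (gam alp mu p u0 : R) (g : R -> R) : Prop :=
  continuous_on_closed 0 u0 g /\
  forall u, 0 < u <= u0 -> g u = rhs F gam alp mu p g u.

From Stdlib Require Import Reals Lra Lia.
From Coquelicot Require Import Coquelicot.
Open Scope R_scope.

(* Write phi(t) = t^(gam-2) e^(-alp/t) and w(u) = u^gam e^(-alp/u), so that the equation reads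
   g = T g with T g(u) = mu / w(u) * int_0^u phi(t) (p Fbar(t) + (g * Fbar)(t)) dt.  Since
   w' = (alp + gam u) phi, we get int_0^u phi <= 2 w(u) / alp as soon as |gam| u <= alp / 2, so
   |T g(u)| <= 2 mu / alp * sup |p Fbar + g * Fbar|.  As |(g - h) * Fbar|(t) <= t sup |g - h|, T
   halves sup-distances on [0, u0] when 4 mu u0 <= alp.  The same identity writes
   T g(u) - mu p / alp as such an average of p Fbar(t) + (g * Fbar)(t) - p - p gam t / alp, which
   tends to 0 at 0 because F(0) = 0; hence T g(u) -> mu p / alp = lambda p / c.  Extending T g by
   this value at 0 and constantly outside [0, u0] gives a contraction on continuous functions on R,
   whose unique fixed point is the solution.  Since Fbar may be discontinuous, the integrals are
   handled through the Riemann integrability of continuous times monotone functions. *)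

Definition clamp (a b x : R) : R := Rmax a (Rmin b x).

Lemma clamp_in a b x : a <= b -> a <= clamp a b x <= b.
Proof. intros. unfold clamp, Rmax, Rmin. repeat destruct Rle_dec; lra. Qed.

Lemma clamp_id a b x : a <= x <= b -> clamp a b x = x.
Proof. intros. unfold clamp, Rmax, Rmin. repeat destruct Rle_dec; lra. Qed.

Lemma continuous_clamp a b x : a <= b -> continuous (clamp a b) x.
Proof.
  intros Hab. apply filterlim_locally. intros eps. exists eps. intros y Hy.
  change (Rabs (clamp a b y - clamp a b x) < eps). change (Rabs (y - x) < eps) in Hy.
  unfold clamp, Rmax, Rmin in *. repeat destruct Rle_dec; unfold Rabs in *;
    repeat destruct Rcase_abs; lra.
Qed.

Lemma continuous_bounded_segment (f : R -> R) (a b : R) : a <= b ->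
  (forall x, a <= x <= b -> continuous f x) ->
  exists B, forall x, a <= x <= b -> Rabs (f x) <= B.
Proof.
  intros Hab Hf.
  destruct (continuity_ab_maj (fun x => Rabs (f x)) a b Hab) as [M [HM _]].
  - intros x Hx. apply continuity_pt_filterlim, (continuous_comp f Rabs).
    + now apply Hf.
    + apply continuous_Rabs.
  - now exists (Rabs (f M)).
Qed.

Lemma locally_pos (x : R) : 0 < x -> locally x (fun y => 0 < y).
Proof.
  intros Hx. exists (mkposreal x Hx). intros y Hy. change (Rabs (y - x) < x) in Hy.
  apply Rabs_lt_between in Hy. lra.
Qed.

Lemma continuous_on_closed_of_continuous (f : R -> R) (a b : R) :
  (forall x, a <= x <= b -> continuous f x) -> continuous_on_closed a b f.
Proof. intros Hf x Hx. apply (filterlim_filter_le_1 f (filter_le_within _)), Hf, Hx. Qed.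

Lemma continuous_clamp_comp (f : R -> R) (a b x : R) : a <= b ->
  continuous_on_closed a b f -> continuous (fun y => f (clamp a b y)) x.
Proof.
  intros Hab Hf.
  apply (filterlim_comp _ _ _ (clamp a b) f _
           (within (fun y => a <= y <= b) (locally (clamp a b x)))).
  - intros P HP. change (locally x (fun y => P (clamp a b y))).
    apply (filter_imp (fun y => a <= clamp a b y <= b -> P (clamp a b y))).
    + intros y Hy. apply Hy, clamp_in, Hab.
    + exact (continuous_clamp a b x Hab _ HP).
  - apply Hf, clamp_in, Hab.
Qed.

Lemma bounded_of_clamp_invariant (f : R -> R) (a b : R) : a <= b ->
  (forall x, continuous f x) -> (forall x, f x = f (clamp a b x)) ->
  exists D, forall x, Rabs (f x) <= D.
Proof.
  intros Hab Hf Hinv. destruct (continuous_bounded_segment f a b Hab (fun x _ => Hf x)) as [D HD].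
  exists D. intros x. rewrite Hinv. apply HD, clamp_in, Hab.
Qed.

Lemma continuous_uniform_limit (fn : nat -> R -> R) (g : R -> R) :
  (forall n x, continuous (fn n) x) ->
  (forall eps : posreal, eventually (fun n => forall x, Rabs (fn n x - g x) < eps)) ->
  forall x, continuous g x.
Proof.
  intros Hfn Hunif x.
  apply (filterlim_switch_1 eventually _ (locally x) _ fn g (fun n => fn n x)).
  - apply filterlim_locally. intros eps. destruct (Hunif eps) as [N HN].
    exists N. intros n Hn y. apply HN, Hn.
  - intros n. apply Hfn.
  - apply filterlim_locally. intros eps. destruct (Hunif eps) as [N HN].
    exists N. intros n Hn. apply HN, Hn.
Qed.

(** * Integrability of continuous times monotone functions *)

Lemma ex_RInt_uniform_approx (f : R -> R) (fn : nat -> R -> R) (a b : R) :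
  a <= b -> (forall n, ex_RInt (fn n) a b) ->
  (forall eps : posreal,
     eventually (fun n => forall x, a <= x <= b -> Rabs (fn n x - f x) < eps)) ->
  ex_RInt f a b.
Proof.
  intros Hab Hfn Hconv.
  (* Composing with [clamp a b] makes the convergence uniform on all of R. *)
  pose (cl := clamp a b).
  assert (Heq : forall (h : R -> R) x, Rmin a b < x < Rmax a b -> h (cl x) = h x).
  { intros h x Hx. rewrite Rmin_left, Rmax_right in Hx by lra.
    unfold cl. now rewrite clamp_id by lra. }
  assert (Hfnc : forall n, is_RInt (fun x => fn n (cl x)) a b (RInt (fun x => fn n (cl x)) a b)).
  { intros n. apply (RInt_correct (V := R_CompleteNormedModule)).
    apply (ex_RInt_ext (fn n)); [intros; symmetry; apply Heq; auto | apply Hfn]. }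
  destruct (filterlim_RInt (fun n x => fn n (cl x)) a b eventually _ (fun x => f (cl x)) _ Hfnc)
    as [If [_ HIf]].
  - apply filterlim_locally. intros eps. destruct (Hconv eps) as [N HN].
    exists N. intros n Hn x. apply (HN n Hn (cl x)). apply clamp_in, Hab.
  - exists If. apply (is_RInt_ext _ _ _ _ _ (fun x Hx => Heq f x Hx) HIf).
Qed.

Lemma ex_RInt_mul_indicator_upset (f h : R -> R) (a b c : R) : a <= b ->
  (forall x, a <= x <= b -> continuous f x) ->
  (forall x y, a <= x -> x <= y -> y <= b -> h x <= h y) ->
  ex_RInt (fun x => f x * (if Rle_dec c (h x) then 1 else 0)) a b.
Proof.
  intros Hab Hf Hh.
  (* The integrand vanishes left of [s = sup S] and equals [f] right of it. *)
  pose (S x := x <= a \/ (x <= b /\ h x < c)).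
  destruct (completeness S) as [s [Hub Hleast]].
  { exists b. intros x [Hx | [Hx _]]; lra. }
  { exists a. left. lra. }
  assert (Has : a <= s) by (apply Hub; left; lra).
  assert (Hsb : s <= b) by (apply Hleast; intros x [Hx | [Hx _]]; lra).
  apply (ex_RInt_Chasles _ a s b).
  - apply (ex_RInt_ext (fun _ => 0)); [| apply ex_RInt_const].
    intros x Hx. rewrite Rmin_left, Rmax_right in Hx by lra.
    destruct Rle_dec as [Hc | _]; [| now rewrite Rmult_0_r].
    enough (s <= x) by lra.
    apply Hleast. intros y [Hy | [Hyb Hy]]; [lra |].
    destruct (Rle_dec y x) as [| Hxy]; [lra |].
    specialize (Hh x y ltac:(lra) ltac:(lra) Hyb). lra.
  - apply (ex_RInt_ext f).
    + intros x Hx. rewrite Rmin_left, Rmax_right in Hx by lra.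
      destruct Rle_dec as [_ | Hc]; [now rewrite Rmult_1_r |].
      enough (x <= s) by lra. apply Hub. right. lra.
    + apply (ex_RInt_continuous (V := R_CompleteNormedModule)).
      intros x Hx. rewrite Rmin_left, Rmax_right in Hx by lra. apply Hf. lra.
Qed.

Fixpoint staircase (e y : R) (n : nat) : R :=
  match n with
  | O => 0
  | S j => staircase e y j + (if Rle_dec (INR (S j) * e) y then e else 0)
  end.

Lemma staircase_spec (e y : R) (n : nat) : 0 < e -> 0 <= y < INR n * e ->
  y - e < staircase e y n <= y.
Proof.
  intros He [Hy Hyn].
  enough (Hinv : forall n, (INR n * e <= y -> staircase e y n = INR n * e) /\
                           (y < INR n * e -> y - e < staircase e y n <= y))
    by now apply Hinv.
  clear n Hyn. induction n as [|n [IH1 IH2]].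
  - simpl. split; intros; lra.
  - cbn [staircase]. destruct Rle_dec as [Hle | Hlt].
    + rewrite S_INR in *. rewrite IH1 by lra. split; intros; lra.
    + rewrite Rplus_0_r. split; [intros; lra |]. intros _.
      rewrite S_INR in Hlt. destruct (Rle_dec (INR n * e) y).
      * rewrite IH1 by lra. lra.
      * apply IH2. lra.
Qed.

Lemma ex_RInt_mul_staircase (f h : R -> R) (a b e : R) (n : nat) : a <= b ->
  (forall x, a <= x <= b -> continuous f x) ->
  (forall x y, a <= x -> x <= y -> y <= b -> h x <= h y) ->
  ex_RInt (fun x => f x * staircase e (h x) n) a b.
Proof.
  intros Hab Hf Hh. induction n as [|n IH].
  - apply (ex_RInt_ext (fun _ => 0)); [intros; simpl; now rewrite Rmult_0_r | apply ex_RInt_const].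
  - apply (ex_RInt_ext (fun x => plus (f x * staircase e (h x) n)
             (scal e (f x * (if Rle_dec (INR (S n) * e) (h x) then 1 else 0))))).
    + intros x _. cbn [staircase]. unfold plus, scal; simpl. unfold mult; simpl.
      destruct Rle_dec; ring.
    + apply (ex_RInt_plus (V := R_NormedModule)); [exact IH |].
      apply (ex_RInt_scal (V := R_NormedModule)), ex_RInt_mul_indicator_upset; auto.
Qed.

Lemma eventually_div_INR_S_lt (C : R) (eps : posreal) :
  eventually (fun n => C / INR (S n) < eps).
Proof.
  assert (Hlim : is_lim_seq (fun n => C / INR (S n)) 0).
  { rewrite <- (Rmult_0_r C). apply (is_lim_seq_scal_l _ C 0).
    apply (is_lim_seq_incr_1 (fun n => / INR n)).
    exact (is_lim_seq_inv _ _ is_lim_seq_INR ltac:(discriminate)). }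
  apply is_lim_seq_spec in Hlim. destruct (Hlim eps) as [N HN].
  exists N. intros n Hn. specialize (HN n Hn). rewrite Rminus_0_r in HN.
  eapply Rle_lt_trans; [apply Rle_abs | exact HN].
Qed.

Lemma ex_RInt_mul_nondecreasing_segment (f h : R -> R) (a b : R) : a <= b ->
  (forall x, a <= x <= b -> continuous f x) ->
  (forall x y, a <= x -> x <= y -> y <= b -> h x <= h y) ->
  ex_RInt (fun x => f x * h x) a b.
Proof.
  intros Hab Hf Hh.
  (* [h] is the uniform limit on [a, b] of [h a] plus staircase functions of [h - h a]. *)
  destruct (continuous_bounded_segment f a b Hab Hf) as [B HB].
  pose (d := h b - h a + 1).
  pose (e n := d / INR (S n)).
  assert (Hd : 0 < d) by (unfold d; specialize (Hh a b ltac:(lra) Hab ltac:(lra)); lra).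
  assert (He : forall n, 0 < e n)
    by (intros n; apply Rdiv_lt_0_compat; [exact Hd | apply lt_0_INR; lia]).
  apply (ex_RInt_uniform_approx _
           (fun n x => f x * h a + f x * staircase (e n) (h x - h a) (S n)) a b Hab).
  - intros n. apply (ex_RInt_plus (V := R_NormedModule)).
    + apply (ex_RInt_continuous (V := R_CompleteNormedModule)). intros x Hx.
      rewrite Rmin_left, Rmax_right in Hx by lra.
      apply (continuous_mult f (fun _ => h a)); [apply Hf; lra | apply continuous_const].
    + apply ex_RInt_mul_staircase; auto. intros x y Hx Hxy Hy. specialize (Hh x y Hx Hxy Hy). lra.
  - intros eps. destruct (eventually_div_INR_S_lt (B * d) eps) as [N HN].
    exists N. intros n Hn x Hx.
    assert (Hy : 0 <= h x - h a < INR (S n) * e n).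
    { replace (INR (S n) * e n) with d by (unfold e; field; apply not_0_INR; lia).
      pose proof (Hh a x ltac:(lra) ltac:(lra) ltac:(lra)).
      pose proof (Hh x b ltac:(lra) ltac:(lra) ltac:(lra)). unfold d. lra. }
    destruct (staircase_spec (e n) (h x - h a) (S n) (He n) Hy) as [S1 S2].
    replace (f x * h a + f x * staircase (e n) (h x - h a) (S n) - f x * h x)
      with (- (f x * ((h x - h a) - staircase (e n) (h x - h a) (S n)))) by ring.
    rewrite Rabs_Ropp, Rabs_mult, (Rabs_right (_ - staircase _ _ _)) by lra.
    apply Rle_lt_trans with (B * e n).
    { apply Rmult_le_compat; [apply Rabs_pos | lra | apply HB; lra | lra]. }
    unfold e, Rdiv. rewrite <- Rmult_assoc. exact (HN n Hn).
Qed.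

Lemma ex_RInt_mul_nondecreasing (f h : R -> R) (a b : R) :
  (forall x, continuous f x) -> (forall x y, x <= y -> h x <= h y) ->
  ex_RInt (fun x => f x * h x) a b.
Proof.
  intros Hf Hh.
  destruct (Rle_dec a b); [| apply ex_RInt_swap];
    apply ex_RInt_mul_nondecreasing_segment; auto; lra.
Qed.

Lemma ex_RInt_mul_nonincreasing (f h : R -> R) (a b : R) :
  (forall x, continuous f x) -> (forall x y, x <= y -> h y <= h x) ->
  ex_RInt (fun x => f x * h x) a b.
Proof.
  intros Hf Hh.
  apply (ex_RInt_ext (fun x => opp (f x * - h x))); [intros; unfold opp; simpl; ring |].
  apply (ex_RInt_opp (V := R_NormedModule)), ex_RInt_mul_nondecreasing; auto.
  intros x y Hxy. specialize (Hh x y Hxy). lra.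
Qed.

(** * Convolution with a monotone kernel *)

Lemma RInt_reflect (f : R -> R) (t : R) :
  ex_RInt f 0 t -> RInt f 0 t = RInt (fun s => f (t - s)) 0 t.
Proof.
  intros Hf. symmetry. apply (is_RInt_unique (V := R_CompleteNormedModule)).
  assert (I : is_RInt f (-1 * 0 + t) (-1 * t + t) (opp (RInt f 0 t))).
  { replace (-1 * 0 + t) with t by ring. replace (-1 * t + t) with 0 by ring.
    apply (is_RInt_swap (V := R_NormedModule)), (RInt_correct (V := R_CompleteNormedModule)), Hf. }
  apply (is_RInt_comp_lin (V := R_NormedModule)), (is_RInt_opp (V := R_NormedModule)) in I.
  rewrite opp_opp in I. refine (is_RInt_ext (V := R_NormedModule) _ _ _ _ _ _ I).
  intros x _. unfold opp, scal; simpl. unfold mult; simpl.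
  replace (-1 * x + t) with (t - x) by ring. ring.
Qed.

Lemma abs_RInt_le_const_between (f : R -> R) (a b M : R) : ex_RInt f a b ->
  (forall t, Rmin a b <= t <= Rmax a b -> Rabs (f t) <= M) ->
  Rabs (RInt f a b) <= Rabs (b - a) * M.
Proof.
  intros Hf HM. destruct (Rle_dec a b).
  - rewrite (Rabs_right (b - a)) by lra. apply abs_RInt_le_const; auto.
    intros t Ht. apply HM. rewrite Rmin_left, Rmax_right; lra.
  - rewrite <- (opp_RInt_swap _ _ _ (ex_RInt_swap _ _ _ Hf)), <- Rabs_Ropp.
    rewrite (Rabs_left (b - a)) by lra.
    change (Rabs (- - RInt f b a) <= - (b - a) * M). rewrite Ropp_involutive.
    replace (- (b - a)) with (a - b) by ring.
    apply abs_RInt_le_const; [lra | now apply ex_RInt_swap |].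
    intros t Ht. apply HM. rewrite Rmin_right, Rmax_left; lra.
Qed.

Lemma ex_RInt_shift_mul (g k : R -> R) (t a b : R) :
  (forall x, continuous g x) -> (forall x y, x <= y -> k y <= k x) ->
  ex_RInt (fun s => g (t - s) * k s) a b.
Proof.
  intros Hg Hk. apply ex_RInt_mul_nonincreasing; auto. intros x.
  apply (continuous_comp (fun s => t - s) g); [| apply Hg].
  apply (continuous_minus (fun _ => t) (fun s => s));
    [apply continuous_const | apply continuous_id].
Qed.

Lemma RInt_shift_mul_diff_le (g k : R -> R) (B C w t0 t : R) :
  (forall x, continuous g x) -> (forall x y, x <= y -> k y <= k x) ->
  (forall s, Rabs (k s) <= C) -> (forall x, Rabs x <= Rabs t0 + 1 -> Rabs (g x) <= B) ->
  (forall s, Rmin 0 t0 <= s <= Rmax 0 t0 -> Rabs (g (t - s) - g (t0 - s)) <= w) ->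
  Rabs (t - t0) <= 1 ->
  Rabs (RInt (fun s => g (t - s) * k s) 0 t - RInt (fun s => g (t0 - s) * k s) 0 t0)
    <= Rabs (t - t0) * (B * C) + Rabs t0 * (w * C).
Proof.
  intros Hg Hk HC HB Hw Ht.
  pose proof (fun t a b => ex_RInt_shift_mul g k t a b Hg Hk) as Hint.
  rewrite <- (RInt_Chasles (fun s => g (t - s) * k s) 0 t0 t) by auto.
  assert (E := RInt_minus (V := R_CompleteNormedModule) (fun s => g (t - s) * k s)
                 (fun s => g (t0 - s) * k s) 0 t0 (Hint _ _ _) (Hint _ _ _)).
  unfold minus, plus, opp in *; simpl in *.
  replace (RInt (fun s => g (t - s) * k s) 0 t0 + RInt (fun s => g (t - s) * k s) t0 t -
           RInt (fun s => g (t0 - s) * k s) 0 t0)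
    with (RInt (fun s => g (t - s) * k s) t0 t
          + RInt (fun s => g (t - s) * k s + - (g (t0 - s) * k s)) 0 t0) by (rewrite E; ring).
  eapply Rle_trans; [apply Rabs_triang | apply Rplus_le_compat].
  - apply abs_RInt_le_const_between; [auto |]. intros s Hs.
    rewrite Rabs_mult. apply Rmult_le_compat; try apply Rabs_pos; [apply HB | apply HC].
    unfold Rmin, Rmax in Hs; destruct Rle_dec; unfold Rabs in *; repeat destruct Rcase_abs; lra.
  - replace (Rabs t0) with (Rabs (t0 - 0)) by (now rewrite Rminus_0_r).
    apply abs_RInt_le_const_between; [apply (ex_RInt_minus (V := R_NormedModule)); auto |].
    intros s Hs.
    replace (g (t - s) * k s + - (g (t0 - s) * k s)) with ((g (t - s) - g (t0 - s)) * k s) by ring.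
    rewrite Rabs_mult. apply Rmult_le_compat; try apply Rabs_pos; auto.
Qed.

Lemma mul_lt_half_of_le_div (x y : R) (eps : posreal) :
  0 <= y -> x <= eps / (2 * (y + 1)) -> x * y < eps / 2.
Proof.
  intros Hy Hx. pose proof (cond_pos eps).
  apply Rle_lt_trans with (eps / (2 * (y + 1)) * y); [now apply Rmult_le_compat_r |].
  apply Rmult_lt_reg_r with (2 * (y + 1)); [lra |]. field_simplify; nra.
Qed.

Lemma continuous_RInt_shift_mul (g k : R -> R) (C t0 : R) :
  (forall x, continuous g x) -> (forall x y, x <= y -> k y <= k x) ->
  (forall s, Rabs (k s) <= C) ->
  continuous (fun t => RInt (fun s => g (t - s) * k s) 0 t) t0.
Proof.
  intros Hg Hk HC.
  assert (HC0 : 0 <= C) by (eapply Rle_trans; [apply Rabs_pos | apply (HC 0)]).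
  pose (r := Rabs t0 + 1).
  assert (Hr : Rabs t0 < r) by (unfold r; lra).
  assert (Hr0 : 0 <= Rabs t0) by apply Rabs_pos.
  destruct (continuous_bounded_segment g (-r) r ltac:(lra) (fun x _ => Hg x)) as [B HB].
  assert (HB0 : 0 <= B) by (eapply Rle_trans; [apply Rabs_pos | apply (HB 0); lra]).
  apply filterlim_locally. intros eps.
  pose (w := eps / (2 * (r * C + 1))).
  assert (Hw : 0 < w) by (apply Rdiv_lt_0_compat; [apply cond_pos | nra]).
  destruct (unifcont_normed_1d g (-r) r (fun x _ => Hg x) (mkposreal w Hw)) as [d1 Hd1].
  pose (d2 := eps / (2 * (B * C + 1))).
  assert (Hd2 : 0 < d2) by (apply Rdiv_lt_0_compat; [apply cond_pos | nra]).
  exists (mkposreal _ (Rmin_pos 1 _ Rlt_0_1 (Rmin_pos d1 _ (cond_pos d1) Hd2))).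
  intros t Ht. change (Rabs (t - t0) < Rmin 1 (Rmin d1 d2)) in Ht.
  pose proof (Rmin_l 1 (Rmin d1 d2)). pose proof (Rmin_r 1 (Rmin d1 d2)).
  pose proof (Rmin_l d1 d2). pose proof (Rmin_r d1 d2).
  eapply Rle_lt_trans.
  { apply (RInt_shift_mul_diff_le g k B C w); auto; [| | lra].
    - intros x Hx. apply HB. now apply Rabs_le_between.
    - intros s Hs. left. apply (Hd1 (t0 - s) (t - s)).
      + unfold Rmin, Rmax in Hs; destruct Rle_dec; unfold r, Rabs in *;
          repeat destruct Rcase_abs; lra.
      + unfold Rmin, Rmax in Hs; destruct Rle_dec; unfold r, Rabs in *;
          repeat destruct Rcase_abs; lra.
      + change (Rabs (t - s - (t0 - s)) < d1).
        replace (t - s - (t0 - s)) with (t - t0) by ring. lra. }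
  assert (Rabs (t - t0) * (B * C) < eps / 2)
    by (apply mul_lt_half_of_le_div; [nra | unfold d2 in *; lra]).
  assert (w * (r * C) < eps / 2) by (apply mul_lt_half_of_le_div; [nra | apply Rle_refl]).
  assert (0 <= w * C) by (apply Rmult_le_pos; lra).
  assert (Rabs t0 * (w * C) <= w * (r * C)) by nra.
  lra.
Qed.

(** * The weights t^beta e^(-alp/t) *)

Definition ext0 (f : R -> R) (t : R) : R := if Rle_dec t 0 then 0 else f t.

Definition rpow_exp (beta alp t : R) : R := Rpower t beta * exp (- alp / t).

Lemma rpow_exp_pos beta alp t : 0 < rpow_exp beta alp t.
Proof. apply Rmult_lt_0_compat; [apply exp_pos | apply exp_pos]. Qed.

Lemma rpow_exp_le_linear (beta alp : R) : 0 < alp ->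
  exists K, forall t, 0 < t <= 1 -> rpow_exp beta alp t <= K * t.
Proof.
  intros Ha.
  (* [ln s <= ep s - 1 - ln ep] at [s = 1/t] bounds [(beta - 1) ln t] by [alp / t + const]. *)
  pose (b := Rabs (beta - 1) + 1).
  assert (Hb : 0 < b) by (unfold b; pose proof (Rabs_pos (beta - 1)); lra).
  pose (ep := alp / b).
  assert (Hep : 0 < ep) by (apply Rdiv_lt_0_compat; lra).
  exists (exp (b * (-1 - ln ep))). intros t Ht.
  assert (Hlnt : ln t <= 0) by (rewrite <- ln_1; apply ln_le; lra).
  assert (Hln : - ln t <= ep / t - 1 - ln ep).
  { assert (Hy : 0 < ep / t) by (apply Rdiv_lt_0_compat; lra).
    pose proof (exp_ineq1_le (ln (ep / t))) as H.
    rewrite exp_ln, ln_div in H by lra. lra. }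
  assert (Hbeta : (beta - 1) * ln t <= b * - ln t).
  { unfold b. destruct (Rle_dec 1 beta).
    - rewrite Rabs_right by lra. nra.
    - rewrite Rabs_left by lra. nra. }
  assert (Hexp : beta * ln t + - alp / t <= ln t + b * (-1 - ln ep)).
  { replace (- alp / t) with (- (b * (ep / t))) by (unfold ep; field; lra). nra. }
  unfold rpow_exp, Rpower. rewrite <- exp_plus.
  apply Rle_trans with (exp (ln t + b * (-1 - ln ep))).
  { destruct (Rle_lt_or_eq_dec _ _ Hexp) as [Hlt | ->]; [left; now apply exp_increasing | lra]. }
  rewrite exp_plus, exp_ln by lra. lra.
Qed.

Lemma ext0_locally_pos (f : R -> R) (x : R) : 0 < x -> locally x (fun y => f y = ext0 f y).
Proof.
  intros Hx. apply (filter_imp (fun y => 0 < y)); [| now apply locally_pos].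
  intros y Hy. unfold ext0. destruct Rle_dec; [lra | reflexivity].
Qed.

Lemma ext0_locally_neg (f : R -> R) (x : R) : x < 0 -> locally x (fun y => 0 = ext0 f y).
Proof.
  intros Hx. exists (mkposreal (- x) ltac:(lra)). intros y Hy. change (Rabs (y - x) < - x) in Hy.
  apply Rabs_lt_between in Hy. unfold ext0. destruct Rle_dec; [reflexivity | lra].
Qed.

Lemma continuous_ext0_at_0 (f : R -> R) (K : R) :
  (forall t, 0 < t <= 1 -> Rabs (f t) <= K * t) -> continuous (ext0 f) 0.
Proof.
  intros HK.
  assert (HK0 : 0 <= K) by (specialize (HK 1 ltac:(lra)); pose proof (Rabs_pos (f 1)); lra).
  apply filterlim_locally. intros eps.
  assert (Hd : 0 < Rmin 1 (eps / (K + 1)))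
    by (apply Rmin_pos; [lra | apply Rdiv_lt_0_compat; [apply cond_pos | lra]]).
  exists (mkposreal _ Hd). intros y Hy. change (Rabs (y - 0) < Rmin 1 (eps / (K + 1))) in Hy.
  change (Rabs (ext0 f y - ext0 f 0) < eps).
  rewrite Rminus_0_r in Hy. apply Rabs_lt_between in Hy.
  pose proof (Rmin_l 1 (eps / (K + 1))). pose proof (Rmin_r 1 (eps / (K + 1))).
  unfold ext0. destruct (Rle_dec 0 0) as [_ | ]; [rewrite Rminus_0_r | lra].
  destruct Rle_dec; [rewrite Rabs_R0; apply cond_pos |].
  apply Rle_lt_trans with (K * y); [apply HK; lra |].
  apply Rle_lt_trans with (K * (eps / (K + 1))); [apply Rmult_le_compat_l; lra |].
  apply Rmult_lt_reg_r with (K + 1); [lra |].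
  replace (K * (eps / (K + 1)) * (K + 1)) with (K * eps) by (field; lra).
  pose proof (cond_pos eps). nra.
Qed.

Lemma continuous_ext0_rpow_exp (beta alp x : R) : 0 < alp ->
  continuous (ext0 (rpow_exp beta alp)) x.
Proof.
  intros Ha. destruct (Rtotal_order x 0) as [Hx | [-> | Hx]].
  - apply (continuous_ext_loc _ (fun _ => 0));
      [now apply ext0_locally_neg | apply continuous_const].
  - destruct (rpow_exp_le_linear beta alp Ha) as [K HK].
    apply (continuous_ext0_at_0 _ K). intros t Ht.
    rewrite Rabs_right by (left; apply rpow_exp_pos). now apply HK.
  - apply (continuous_ext_loc _ (rpow_exp beta alp)); [now apply ext0_locally_pos |].
    apply (ex_derive_continuous (V := R_NormedModule)). unfold rpow_exp, Rpower.
    auto_derive. lra.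
Qed.

Lemma is_derive_rpow_exp (gam alp x : R) : 0 < x ->
  is_derive (rpow_exp gam alp) x ((alp + gam * x) * rpow_exp (gam - 2) alp x).
Proof.
  intros Hx. unfold rpow_exp, Rpower. auto_derive; [lra |].
  replace ((gam - 2) * ln x) with (gam * ln x + - (ln x + ln x)) by ring.
  rewrite exp_plus, exp_Ropp, exp_plus, exp_ln by lra.
  unfold Rdiv. field. lra.
Qed.

Lemma rpow_exp_eq_RInt (gam alp u : R) : 0 < alp -> 0 < u ->
  rpow_exp gam alp u = RInt (fun t => (alp + gam * t) * ext0 (rpow_exp (gam - 2) alp) t) 0 u.
Proof.
  intros Ha Hu.
  pose (k t := (alp + gam * t) * ext0 (rpow_exp (gam - 2) alp) t).
  assert (Hk : forall x, continuous k x).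
  { intros x. apply (continuous_mult (fun t => alp + gam * t));
      [| now apply continuous_ext0_rpow_exp].
    apply (ex_derive_continuous (V := R_NormedModule)). auto_derive. easy. }
  assert (Hd : forall x, is_derive (fun y => RInt k 0 y) x (k x)).
  { intros x. apply (is_derive_RInt (V := R_CompleteNormedModule) k _ 0); [| apply Hk].
    apply filter_forall. intros y. apply (RInt_correct (V := R_CompleteNormedModule)).
    apply (ex_RInt_continuous (V := R_CompleteNormedModule)). intros; apply Hk. }
  pose (H y := ext0 (rpow_exp gam alp) y - RInt k 0 y).
  destruct (MVT_gen H 0 u (fun _ => 0)) as [c [_ Hc]].
  - intros x Hx. rewrite Rmin_left, Rmax_right in Hx by lra.
    assert (Dw : is_derive (ext0 (rpow_exp gam alp)) x
                   ((alp + gam * x) * rpow_exp (gam - 2) alp x)).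
    { apply (is_derive_ext_loc (rpow_exp gam alp)); [apply ext0_locally_pos; lra |].
      now apply is_derive_rpow_exp. }
    replace 0 with (minus ((alp + gam * x) * rpow_exp (gam - 2) alp x) (k x))
      by (unfold k, ext0, minus, plus, opp; simpl; destruct Rle_dec; [lra | ring]).
    exact (is_derive_minus _ _ _ _ _ Dw (Hd x)).
  - intros x _. apply continuity_pt_filterlim.
    apply (continuous_minus (V := R_NormedModule)); [now apply continuous_ext0_rpow_exp |].
    apply (ex_derive_continuous (V := R_NormedModule)). eexists. apply Hd.
  - unfold H in Hc. rewrite Rmult_0_l, RInt_point in Hc. unfold ext0 in Hc.
    destruct (Rle_dec u 0); [lra |]. destruct (Rle_dec 0 0); [| lra].
    change (rpow_exp gam alp u - RInt k 0 u - (0 - 0) = 0) in Hc.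
    change (rpow_exp gam alp u = RInt k 0 u). lra.
Qed.

(** * Contraction principle for continuous functions *)

Section ContractionFixedPoint.

Variable T : (R -> R) -> (R -> R).
Variable k : R.
Hypothesis k_range : 0 <= k < 1.
Hypothesis T_continuous :
  forall g, (forall x, continuous g x) -> forall x, continuous (T g) x.
Hypothesis T_contraction : forall g h D,
  (forall x, continuous g x) -> (forall x, continuous h x) ->
  (forall x, Rabs (g x - h x) <= D) -> forall x, Rabs (T g x - T h x) <= k * D.

Lemma geom_tail_small (C : R) (eps : posreal) :
  exists N, forall n, (N <= n)%nat -> C * k ^ n < eps.
Proof.
  assert (Hlim : is_lim_seq (fun n => C * k ^ n) 0).
  { rewrite <- (Rmult_0_r C). apply (is_lim_seq_scal_l _ C 0).
    apply is_lim_seq_geom. rewrite Rabs_right; lra. }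
  apply is_lim_seq_spec in Hlim. destruct (Hlim eps) as [N HN].
  exists N. intros n Hn. specialize (HN n Hn). rewrite Rminus_0_r in HN.
  eapply Rle_lt_trans; [apply Rle_abs | exact HN].
Qed.

Lemma eq_0_of_abs_le_geom (a C : R) : (forall n, Rabs a <= C * k ^ n) -> a = 0.
Proof.
  intros Ha. apply Rabs_eq_0, Rle_antisym; [| apply Rabs_pos].
  apply Rnot_lt_le. intros Hpos.
  destruct (geom_tail_small C (mkposreal _ Hpos)) as [N HN].
  specialize (HN N (le_n N)). specialize (Ha N). simpl in HN. lra.
Qed.

Lemma contraction_fixed_point_unique (g h : R -> R) (D : R) :
  (forall x, continuous g x) -> (forall x, continuous h x) ->
  (forall x, T g x = g x) -> (forall x, T h x = h x) ->
  (forall x, Rabs (g x - h x) <= D) -> forall x, g x = h x.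
Proof.
  intros Hg Hh Tg Th HD.
  assert (Hn : forall n x, Rabs (g x - h x) <= D * k ^ n).
  { induction n as [|n IH]; intros x; [simpl; rewrite Rmult_1_r; apply HD |].
    rewrite <- Tg, <- Th, <- tech_pow_Rmult.
    replace (D * (k * k ^ n)) with (k * (D * k ^ n)) by ring.
    now apply T_contraction. }
  intros x. apply Rminus_diag_uniq. apply (eq_0_of_abs_le_geom _ D). intros n. apply Hn.
Qed.

Section Iterates.

Variables (g0 : R -> R) (D0 : R).
Hypothesis g0_continuous : forall x, continuous g0 x.
Hypothesis g0_displacement : forall x, Rabs (T g0 x - g0 x) <= D0.

Let iterate n := Nat.iter n T g0.

Lemma iterate_continuous n x : continuous (iterate n) x.
Proof.
  revert x; induction n as [|n IH]; intros x; [apply g0_continuous |].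
  apply T_continuous, IH.
Qed.

Lemma iterate_step_le n x : Rabs (iterate (S n) x - iterate n x) <= D0 * k ^ n.
Proof.
  revert x; induction n as [|n IH]; intros x; [simpl; rewrite Rmult_1_r; apply g0_displacement |].
  rewrite <- tech_pow_Rmult. replace (D0 * (k * k ^ n)) with (k * (D0 * k ^ n)) by ring.
  apply T_contraction; [exact (iterate_continuous (S n)) | exact (iterate_continuous n) | apply IH].
Qed.

Lemma iterate_cauchy n j x :
  Rabs (iterate (n + j)%nat x - iterate n x) <= D0 / (1 - k) * k ^ n.
Proof.
  assert (HD0 : 0 <= D0) by (eapply Rle_trans; [apply Rabs_pos | apply (g0_displacement 0)]).
  assert (Hsum : Rabs (iterate (n + j)%nat x - iterate n x)
                 <= D0 / (1 - k) * (k ^ n - k ^ (n + j))).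
  { induction j as [|j IH].
    - rewrite Nat.add_0_r, !Rminus_diag, Rabs_R0. lra.
    - rewrite Nat.add_succ_r.
      replace (iterate (S (n + j)) x - iterate n x)
        with ((iterate (S (n + j)) x - iterate (n + j)%nat x)
              + (iterate (n + j)%nat x - iterate n x)) by ring.
      eapply Rle_trans; [apply Rabs_triang |].
      pose proof (iterate_step_le (n + j) x).
      replace (D0 / (1 - k) * (k ^ n - k ^ S (n + j)))
        with (D0 * k ^ (n + j) + D0 / (1 - k) * (k ^ n - k ^ (n + j))) by (simpl; field; lra).
      lra. }
  eapply Rle_trans; [exact Hsum |]. apply Rmult_le_compat_l.
  - apply Rdiv_le_0_compat; lra.
  - pose proof (pow_le k (n + j) (proj1 k_range)). lra.
Qed.

Lemma iterate_converges_uniformly : exists g : R -> R,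
  forall eps : posreal, eventually (fun n => forall x, Rabs (iterate n x - g x) < eps).
Proof.
  pose (Fi := filtermap iterate eventually).
  assert (Hcauchy : forall eps : posreal,
             exists f : @fct_CompleteSpace R R_CompleteSpace, Fi (ball f eps)).
  { intros eps.
    assert (HD0 : 0 <= D0) by (eapply Rle_trans; [apply Rabs_pos | apply (g0_displacement 0)]).
    destruct (geom_tail_small (D0 / (1 - k)) eps) as [N HN].
    exists (iterate N), N. intros n Hn x.
    replace n with (N + (n - N))%nat by lia.
    eapply Rle_lt_trans; [apply iterate_cauchy | apply HN, le_n]. }
  exists (lim Fi). intros eps. destruct (complete_cauchy Fi _ Hcauchy eps) as [N HN].
  exists N. intros n Hn x. exact (HN n Hn x).
Qed.

Lemma contraction_fixed_point_exists :
  exists g, (forall x, continuous g x) /\ forall x, T g x = g x.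
Proof.
  destruct iterate_converges_uniformly as [g Hunif].
  assert (Hg := continuous_uniform_limit iterate g iterate_continuous Hunif).
  exists g. split; [exact Hg |]. intros x.
  apply Rminus_diag_uniq, Rabs_eq_0, Rle_antisym; [| apply Rabs_pos].
  apply Rnot_lt_le. intros Hpos.
  destruct (Hunif (mkposreal _ (Rdiv_lt_0_compat _ 4 Hpos ltac:(lra)))) as [N HN]. simpl in HN.
  assert (H1 : Rabs (T (iterate N) x - g x) < Rabs (T g x - g x) / 4)
    by apply (HN (S N)), le_S, le_n.
  assert (H2 : Rabs (T g x - T (iterate N) x) <= k * (Rabs (T g x - g x) / 4)).
  { apply T_contraction; [exact Hg | apply iterate_continuous |].
    intros y. rewrite Rabs_minus_sym. left. apply HN, le_n. }
  assert (H3 := Rabs_triang (T g x - T (iterate N) x) (T (iterate N) x - g x)).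
  replace (T g x - T (iterate N) x + (T (iterate N) x - g x)) with (T g x - g x) in H3 by ring.
  assert (k * (Rabs (T g x - g x) / 4) <= Rabs (T g x - g x) / 4) by nra.
  lra.
Qed.

End Iterates.
End ContractionFixedPoint.

(** * The integral operator *)

Section IntegralOperator.

Variable F : R -> R.
Variables gam alp mu p u0 : R.
Hypothesis F_nondecreasing : forall x y, x <= y -> F x <= F y.
Hypothesis F_range : forall x, 0 <= F x <= 1.
Hypothesis F_right_cont_0 : filterlim F (at_right 0) (locally 0).
Hypothesis alp_pos : 0 < alp.
Hypothesis mu_nonneg : 0 <= mu.
Hypothesis u0_pos : 0 < u0.
Hypothesis gam_u0_small : Rabs gam * u0 <= alp / 2.
Hypothesis mu_u0_small : 4 * mu * u0 <= alp.

Let phi := ext0 (rpow_exp (gam - 2) alp).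
Let w := rpow_exp gam alp.
Let dw (t : R) : R := (alp + gam * t) * phi t.

Definition conv (g : R -> R) (t : R) : R := RInt (fun z => g z * Fbar F (t - z)) 0 t.
Definition integrand (g : R -> R) (t : R) : R := phi t * (p * Fbar F t + conv g t).

Lemma Fbar_nonincreasing x y : x <= y -> Fbar F y <= Fbar F x.
Proof. intros Hxy. unfold Fbar. specialize (F_nondecreasing x y Hxy). lra. Qed.

Lemma Fbar_abs_le_1 x : Rabs (Fbar F x) <= 1.
Proof. apply Rabs_le_between. unfold Fbar. specialize (F_range x). lra. Qed.

Lemma ex_RInt_conv (g : R -> R) (t a b : R) : (forall x, continuous g x) ->
  ex_RInt (fun z => g z * Fbar F (t - z)) a b.
Proof.
  intros Hg. apply ex_RInt_mul_nondecreasing; auto.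
  intros x y Hxy. apply Fbar_nonincreasing. lra.
Qed.

(* [t] enters [conv g t] through the possibly discontinuous [Fbar F (t - z)]; after reflection it
   only enters through the continuous factor and the upper limit. *)
Lemma continuous_conv (g : R -> R) (x : R) : (forall x, continuous g x) -> continuous (conv g) x.
Proof.
  intros Hg. apply (continuous_ext (fun t => RInt (fun s => g (t - s) * Fbar F s) 0 t)).
  - intros t. unfold conv. rewrite (RInt_reflect (fun z => g z * Fbar F (t - z)) t)
      by now apply ex_RInt_conv.
    apply RInt_ext. intros s _. now replace (t - (t - s)) with s by ring.
  - apply (continuous_RInt_shift_mul g (Fbar F) 1); auto.
    + exact Fbar_nonincreasing.
    + exact Fbar_abs_le_1.
Qed.

Lemma conv_minus (g h : R -> R) (t : R) :
  (forall x, continuous g x) -> (forall x, continuous h x) ->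
  conv g t - conv h t = conv (fun z => g z - h z) t.
Proof.
  intros Hg Hh. unfold conv.
  rewrite <- (RInt_minus (V := R_CompleteNormedModule)) by now apply ex_RInt_conv.
  apply RInt_ext. intros z _. unfold minus, plus, opp; simpl. ring.
Qed.

Lemma abs_conv_le (g : R -> R) (t M : R) : (forall x, continuous g x) -> 0 <= t ->
  (forall z, 0 <= z <= t -> Rabs (g z) <= M) -> Rabs (conv g t) <= t * M.
Proof.
  intros Hg Ht HM. rewrite <- (Rminus_0_r t) at 2.
  apply abs_RInt_le_const; [lra | now apply ex_RInt_conv |].
  intros z Hz. rewrite Rabs_mult, <- (Rmult_1_r M).
  apply Rmult_le_compat; try apply Rabs_pos; [now apply HM | apply Fbar_abs_le_1].
Qed.

Lemma continuous_phi x : continuous phi x.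
Proof. now apply continuous_ext0_rpow_exp. Qed.

Lemma phi_nonneg t : 0 <= phi t.
Proof. unfold phi, ext0. destruct Rle_dec; [lra | left; apply rpow_exp_pos]. Qed.

Lemma ex_RInt_phi a b : ex_RInt phi a b.
Proof. apply (ex_RInt_continuous (V := R_CompleteNormedModule)). intros; apply continuous_phi. Qed.

Lemma ex_RInt_dw a b : ex_RInt dw a b.
Proof.
  apply (ex_RInt_continuous (V := R_CompleteNormedModule)). intros z _.
  apply (continuous_mult (fun t => alp + gam * t)); [| apply continuous_phi].
  apply (ex_derive_continuous (V := R_NormedModule)). auto_derive. easy.
Qed.

Lemma w_eq_RInt_dw u : 0 < u -> w u = RInt dw 0 u.
Proof. intros Hu. now apply rpow_exp_eq_RInt. Qed.

Lemma ex_RInt_integrand (g : R -> R) (a b : R) : (forall x, continuous g x) ->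
  ex_RInt (integrand g) a b.
Proof.
  intros Hg.
  apply (ex_RInt_ext (fun t => plus (scal p (phi t * Fbar F t)) (phi t * conv g t))).
  { intros t _. unfold integrand, plus, scal; simpl. unfold mult; simpl. ring. }
  apply (ex_RInt_plus (V := R_NormedModule)).
  - apply (ex_RInt_scal (V := R_NormedModule)), ex_RInt_mul_nonincreasing;
      [apply continuous_phi | apply Fbar_nonincreasing].
  - apply (ex_RInt_continuous (V := R_CompleteNormedModule)). intros z _.
    apply (continuous_mult phi (conv g)); [apply continuous_phi | now apply continuous_conv].
Qed.

Lemma rhs_eq (g : R -> R) (u : R) : 0 < u ->
  rhs F gam alp mu p g u = mu / w u * RInt (integrand g) 0 u.
Proof.
  intros Hu. unfold rhs. f_equal. apply RInt_ext. intros t Ht.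
  rewrite Rmin_left, Rmax_right in Ht by lra.
  unfold integrand, phi, ext0. destruct Rle_dec; [lra | reflexivity].
Qed.

Lemma RInt_phi_le (u : R) : 0 < u <= u0 -> RInt phi 0 u <= 2 / alp * w u.
Proof.
  intros Hu.
  assert (Hle : RInt (fun t => alp / 2 * phi t) 0 u <= RInt dw 0 u).
  { apply RInt_le; [lra | | apply ex_RInt_dw |].
    - apply (ex_RInt_scal (V := R_NormedModule) phi), ex_RInt_phi.
    - intros t Ht. apply Rmult_le_compat_r; [apply phi_nonneg |].
      assert (Rabs (gam * t) <= alp / 2).
      { rewrite Rabs_mult. eapply Rle_trans; [| exact gam_u0_small].
        apply Rmult_le_compat_l; [apply Rabs_pos | rewrite Rabs_right; lra]. }
      apply Rabs_le_between in H. lra. }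
  rewrite (RInt_scal (V := R_CompleteNormedModule) phi) in Hle by apply ex_RInt_phi.
  rewrite w_eq_RInt_dw by lra.
  change (scal (alp / 2) (RInt phi 0 u)) with (alp / 2 * RInt phi 0 u) in Hle.
  apply (Rmult_le_reg_l (alp / 2)); [lra |].
  assert (E : forall I : R, alp / 2 * (2 / alp * I) = I) by (intros; field; lra).
  now rewrite E.
Qed.

Lemma abs_RInt_phi_mul_le (psi : R -> R) (u M : R) : 0 < u <= u0 ->
  ex_RInt (fun t => phi t * psi t) 0 u ->
  (forall t, 0 < t < u -> Rabs (psi t) <= M) ->
  Rabs (RInt (fun t => phi t * psi t) 0 u) <= 2 / alp * w u * M.
Proof.
  intros Hu Hint HM.
  assert (HM0 : 0 <= M) by (eapply Rle_trans; [apply Rabs_pos | apply (HM (u / 2)); lra]).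
  assert (HMphi : forall c, ex_RInt (fun t => c * phi t) 0 u)
    by (intros c; apply (ex_RInt_scal (V := R_NormedModule) phi), ex_RInt_phi).
  assert (Hbetween : forall t, 0 < t < u -> - (M * phi t) <= phi t * psi t <= M * phi t).
  { intros t Ht. specialize (HM t Ht). apply Rabs_le_between in HM.
    pose proof (phi_nonneg t). split; nra. }
  assert (Hlo : RInt (fun t => - M * phi t) 0 u <= RInt (fun t => phi t * psi t) 0 u).
  { apply RInt_le; auto; [lra |]. intros t Ht. specialize (Hbetween t Ht). lra. }
  assert (Hhi : RInt (fun t => phi t * psi t) 0 u <= RInt (fun t => M * phi t) 0 u).
  { apply RInt_le; auto; [lra |]. intros t Ht. apply Hbetween, Ht. }
  rewrite (RInt_scal (V := R_CompleteNormedModule) phi) in Hlo, Hhi by apply ex_RInt_phi.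
  change (scal ?c ?x) with (c * x) in Hlo, Hhi.
  apply Rabs_le_between.
  assert (M * RInt phi 0 u <= M * (2 / alp * w u))
    by (apply Rmult_le_compat_l; [lra | now apply RInt_phi_le]).
  split; nra.
Qed.

Lemma abs_phi_average_le (psi : R -> R) (u M : R) : 0 < u <= u0 ->
  ex_RInt (fun t => phi t * psi t) 0 u ->
  (forall t, 0 < t < u -> Rabs (psi t) <= M) ->
  Rabs (mu / w u * RInt (fun t => phi t * psi t) 0 u) <= 2 * mu / alp * M.
Proof.
  intros Hu Hint HM. assert (0 < w u) by apply rpow_exp_pos.
  rewrite Rabs_mult, (Rabs_right (mu / w u)) by (apply Rle_ge, Rdiv_le_0_compat; lra).
  eapply Rle_trans; [apply Rmult_le_compat_l; [apply Rdiv_le_0_compat; lra |] |].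
  { exact (abs_RInt_phi_mul_le psi u M Hu Hint HM). }
  right. field. lra.
Qed.

Lemma rhs_contraction (g h : R -> R) (D u : R) :
  (forall x, continuous g x) -> (forall x, continuous h x) -> 0 < u <= u0 ->
  (forall z, 0 <= z <= u0 -> Rabs (g z - h z) <= D) ->
  Rabs (rhs F gam alp mu p g u - rhs F gam alp mu p h u) <= / 2 * D.
Proof.
  intros Hg Hh Hu HD.
  assert (HD0 : 0 <= D) by (eapply Rle_trans; [apply Rabs_pos | apply (HD 0); lra]).
  assert (Hgh : forall x, continuous (fun z => g z - h z) x)
    by (intros x; now apply (continuous_minus (V := R_NormedModule))).
  assert (E : RInt (integrand g) 0 u - RInt (integrand h) 0 u
              = RInt (fun t => phi t * conv (fun z => g z - h z) t) 0 u).
  { rewrite <- (RInt_minus (V := R_CompleteNormedModule)) by now apply ex_RInt_integrand.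
    apply RInt_ext. intros t _. unfold integrand, minus, plus, opp; simpl.
    rewrite <- conv_minus by auto. ring. }
  rewrite !rhs_eq by lra.
  replace (mu / w u * RInt (integrand g) 0 u - mu / w u * RInt (integrand h) 0 u)
    with (mu / w u * RInt (fun t => phi t * conv (fun z => g z - h z) t) 0 u)
    by (rewrite <- E; ring).
  eapply Rle_trans; [apply (abs_phi_average_le _ u (u0 * D) Hu) |].
  - apply (ex_RInt_continuous (V := R_CompleteNormedModule)). intros z _.
    apply (continuous_mult phi); [apply continuous_phi | now apply continuous_conv].
  - intros t Ht. eapply Rle_trans; [apply abs_conv_le; auto; [lra |] |].
    + intros z Hz. apply HD. lra.
    + apply Rmult_le_compat_r; lra.
  - replace (2 * mu / alp * (u0 * D)) with (4 * mu * u0 / alp * (/ 2 * D)) by (field; lra).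
    rewrite <- (Rmult_1_l (/ 2 * D)) at 2. apply Rmult_le_compat_r; [lra |].
    apply (Rmult_le_reg_r alp); [lra |]. field_simplify; lra.
Qed.

Definition residual (g : R -> R) (t : R) : R :=
  p * Fbar F t + conv g t - p - p / alp * (gam * t).

Lemma conv_residual_small (g : R -> R) (eps : posreal) : (forall x, continuous g x) ->
  at_right 0 (fun t => Rabs (residual g t) < eps).
Proof.
  intros Hg.
  pose (c t := conv g t - p / alp * (gam * t)).
  assert (Hc : continuous c 0).
  { apply (continuous_minus (V := R_NormedModule)); [now apply continuous_conv |].
    apply (ex_derive_continuous (V := R_NormedModule)). auto_derive. easy. }
  assert (Hc0 : c 0 = 0) by (unfold c, conv; rewrite RInt_point; unfold zero; simpl; ring).
  assert (Hsmall_c : at_right 0 (fun t => Rabs (c t) < eps / 2)).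
  { assert (Hloc := proj1 (filterlim_locally c (c 0)) Hc (pos_div_2 eps)).
    rewrite Hc0 in Hloc. apply (filter_imp (fun t => ball 0 (pos_div_2 eps) (c t))).
    - intros t Ht. change (Rabs (c t - 0) < eps / 2) in Ht. now rewrite Rminus_0_r in Ht.
    - exact (filter_le_within _ _ Hloc). }
  assert (Hsmall_F : at_right 0 (fun t => Rabs (p * F t) < eps / 2)).
  { assert (He : 0 < eps / 2 / (Rabs p + 1))
      by (apply Rdiv_lt_0_compat; [apply (pos_div_2 eps) | pose proof (Rabs_pos p); lra]).
    apply (filter_imp (fun t => Rabs (F t - 0) < eps / 2 / (Rabs p + 1))).
    - intros t Ht. rewrite Rminus_0_r in Ht. rewrite Rabs_mult.
      apply Rle_lt_trans with (Rabs p * (eps / 2 / (Rabs p + 1))).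
      + apply Rmult_le_compat_l; [apply Rabs_pos | lra].
      + apply (Rmult_lt_reg_r (Rabs p + 1)); [pose proof (Rabs_pos p); lra |].
        field_simplify; [| pose proof (Rabs_pos p); lra].
        pose proof (cond_pos eps). lra.
    - exact (proj1 (filterlim_locally F 0) F_right_cont_0 (mkposreal _ He)). }
  apply (filter_imp (fun t => Rabs (c t) < eps / 2 /\ Rabs (p * F t) < eps / 2));
    [| now apply filter_and].
  intros t [H1 H2]. unfold residual, c, Fbar in *.
  replace (p * (1 - F t) + conv g t - p - p / alp * (gam * t))
    with ((conv g t - p / alp * (gam * t)) - p * F t) by ring.
  eapply Rle_lt_trans; [apply Rabs_triang |]. rewrite Rabs_Ropp. lra.
Qed.

Lemma phi_mul_residual_eq (g : R -> R) (t : R) :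
  phi t * residual g t = integrand g t - p / alp * dw t.
Proof. unfold residual, integrand, dw. field. lra. Qed.

Lemma ex_RInt_phi_mul_residual (g : R -> R) (a b : R) : (forall x, continuous g x) ->
  ex_RInt (fun t => phi t * residual g t) a b.
Proof.
  intros Hg. apply (ex_RInt_ext (fun t => minus (integrand g t) (scal (p / alp) (dw t)))).
  - intros t _. rewrite phi_mul_residual_eq. reflexivity.
  - apply (ex_RInt_minus (V := R_NormedModule)); [now apply ex_RInt_integrand |].
    apply (ex_RInt_scal (V := R_NormedModule)), ex_RInt_dw.
Qed.

Lemma rhs_sub_limit (g : R -> R) (u : R) : (forall x, continuous g x) -> 0 < u ->
  rhs F gam alp mu p g u - mu * p / alp
  = mu / w u * RInt (fun t => phi t * residual g t) 0 u.
Proof.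
  intros Hg Hu.
  assert (E : RInt (fun t => phi t * residual g t) 0 u
              = RInt (integrand g) 0 u - p / alp * RInt dw 0 u).
  { rewrite <- (RInt_scal (V := R_CompleteNormedModule) dw) by apply ex_RInt_dw.
    rewrite <- (RInt_minus (V := R_CompleteNormedModule));
      [| now apply ex_RInt_integrand | apply (ex_RInt_scal (V := R_NormedModule)), ex_RInt_dw].
    apply RInt_ext. intros t _. apply phi_mul_residual_eq. }
  assert (0 < w u) by apply rpow_exp_pos.
  rewrite rhs_eq, E, <- w_eq_RInt_dw by exact Hu. field. lra.
Qed.

Lemma rhs_at_0 (g : R -> R) : (forall x, continuous g x) ->
  filterlim (rhs F gam alp mu p g) (at_right 0) (locally (mu * p / alp)).
Proof.
  intros Hg. apply filterlim_locally. intros eps.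
  assert (Heta : 0 < eps * alp / (2 * (mu + 1)))
    by (apply Rdiv_lt_0_compat; [apply Rmult_lt_0_compat; [apply cond_pos | lra] | lra]).
  destruct (conv_residual_small g (mkposreal _ Heta) Hg) as [d Hd].
  assert (Hdu : 0 < Rmin d u0) by (apply Rmin_pos; [apply cond_pos | lra]).
  exists (mkposreal _ Hdu). intros u Hu Hu0.
  change (Rabs (u - 0) < Rmin d u0) in Hu. rewrite Rminus_0_r, Rabs_right in Hu by lra.
  assert (Hud := Rmin_l d u0). assert (Huu0 := Rmin_r d u0).
  change (Rabs (rhs F gam alp mu p g u - mu * p / alp) < eps).
  rewrite rhs_sub_limit by auto.
  eapply Rle_lt_trans; [apply (abs_phi_average_le _ u (eps * alp / (2 * (mu + 1)))) |].
  - lra.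
  - now apply ex_RInt_phi_mul_residual.
  - intros t Ht. left. apply Hd; [| lra].
    change (Rabs (t - 0) < d). rewrite Rminus_0_r, Rabs_right; lra.
  - replace (2 * mu / alp * (eps * alp / (2 * (mu + 1)))) with (eps * (mu / (mu + 1)))
      by (field; lra).
    pose proof (cond_pos eps).
    assert (mu / (mu + 1) < 1) by (apply (Rmult_lt_reg_r (mu + 1)); [lra | field_simplify; lra]).
    nra.
Qed.

Lemma continuous_rhs (g : R -> R) (y : R) : (forall x, continuous g x) -> 0 < y ->
  continuous (rhs F gam alp mu p g) y.
Proof.
  intros Hg Hy.
  apply (continuous_ext_loc _ (fun u => mu / w u * RInt (integrand g) 0 u)).
  - apply (filter_imp (fun u => 0 < u)); [| now apply locally_pos].
    intros u Hu. symmetry. now apply rhs_eq.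
  - apply (continuous_mult (fun u => mu / w u)).
    + apply (ex_derive_continuous (V := R_NormedModule)). unfold w, rpow_exp, Rpower.
      auto_derive. repeat split; try lra. apply Rgt_not_eq, Rmult_lt_0_compat; apply exp_pos.
    + apply (continuous_RInt_1 (V := R_CompleteNormedModule) (integrand g) 0), filter_forall.
      intros u.
      apply (RInt_correct (V := R_CompleteNormedModule)), ex_RInt_integrand, Hg.
Qed.

Lemma rhs_ext (g h : R -> R) (u : R) : 0 < u -> (forall z, 0 <= z <= u -> g z = h z) ->
  rhs F gam alp mu p g u = rhs F gam alp mu p h u.
Proof.
  intros Hu Hgh. unfold rhs. f_equal. apply RInt_ext. intros t Ht.
  rewrite Rmin_left, Rmax_right in Ht by lra. do 2 f_equal.
  apply RInt_ext. intros z Hz. rewrite Rmin_left, Rmax_right in Hz by lra.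
  rewrite Hgh by lra. reflexivity.
Qed.

Definition rhs0 (g : R -> R) (y : R) : R :=
  if Rle_dec y 0 then mu * p / alp else rhs F gam alp mu p g y.

(* The operator extended to functions on R; its fixed points are the [clamp]-extensions of the
   solutions on [0, u0]. *)
Definition extended_rhs (g : R -> R) (x : R) : R := rhs0 g (clamp 0 u0 x).

Lemma continuous_on_closed_rhs0 (g : R -> R) : (forall x, continuous g x) ->
  continuous_on_closed 0 u0 (rhs0 g).
Proof.
  intros Hg x Hx. destruct (Rle_lt_dec x 0) as [Hx0 | Hx0].
  - replace x with 0 by lra. unfold rhs0 at 2. destruct (Rle_dec 0 0) as [_ | ]; [| lra].
    apply filterlim_locally. intros eps.
    destruct (proj1 (filterlim_locally _ _) (rhs_at_0 g Hg) eps) as [d Hd].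
    exists d. intros y Hy Hy0. unfold rhs0. destruct Rle_dec.
    + apply ball_center.
    + apply Hd; [exact Hy | lra].
  - apply (filterlim_filter_le_1 _ (filter_le_within _)).
    apply (continuous_ext_loc _ (rhs F gam alp mu p g)); [| now apply continuous_rhs].
    apply (filter_imp (fun y => 0 < y)); [| now apply locally_pos].
    intros y Hy. unfold rhs0. destruct Rle_dec; [lra | reflexivity].
Qed.

Lemma continuous_extended_rhs (g : R -> R) : (forall x, continuous g x) ->
  forall x, continuous (extended_rhs g) x.
Proof. intros Hg x. apply continuous_clamp_comp; [lra | now apply continuous_on_closed_rhs0]. Qed.

Lemma extended_rhs_clamp (g : R -> R) (x : R) : extended_rhs g (clamp 0 u0 x) = extended_rhs g x.
Proof.
  unfold extended_rhs. rewrite (clamp_id 0 u0 (clamp 0 u0 x)); [reflexivity |].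
  apply clamp_in. lra.
Qed.

Lemma extended_rhs_eq (g : R -> R) (x : R) :
  0 < x <= u0 -> extended_rhs g x = rhs F gam alp mu p g x.
Proof.
  intros Hx. unfold extended_rhs, rhs0. rewrite clamp_id by lra.
  destruct Rle_dec; [lra | reflexivity].
Qed.

Lemma extended_rhs_0 (g : R -> R) : extended_rhs g 0 = mu * p / alp.
Proof.
  unfold extended_rhs, rhs0. rewrite clamp_id by lra. destruct Rle_dec; [reflexivity | lra].
Qed.

Lemma extended_rhs_contraction (g h : R -> R) (D : R) :
  (forall x, continuous g x) -> (forall x, continuous h x) ->
  (forall x, Rabs (g x - h x) <= D) ->
  forall x, Rabs (extended_rhs g x - extended_rhs h x) <= / 2 * D.
Proof.
  intros Hg Hh HD x.
  assert (HD0 : 0 <= D) by (eapply Rle_trans; [apply Rabs_pos | apply (HD 0)]).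
  destruct (clamp_in 0 u0 x) as [C0 C1]; [lra |].
  unfold extended_rhs, rhs0. destruct Rle_dec.
  - rewrite Rminus_diag, Rabs_R0. lra.
  - apply rhs_contraction; auto. lra.
Qed.

Lemma extended_rhs_fixed_of_solves (h : R -> R) : solves F gam alp mu p u0 h ->
  forall x, extended_rhs (fun y => h (clamp 0 u0 y)) x = h (clamp 0 u0 x).
Proof.
  intros [Hcont Hsol].
  pose (hh y := h (clamp 0 u0 y)).
  assert (Hhh : forall x, continuous hh x)
    by (intros x; apply continuous_clamp_comp; [lra | exact Hcont]).
  assert (Hhh_eq : forall z, 0 <= z <= u0 -> hh z = h z)
    by (intros z Hz; unfold hh; now rewrite clamp_id).
  assert (Hrhs : forall u, 0 < u <= u0 -> rhs F gam alp mu p hh u = h u).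
  { intros u Hu. rewrite Hsol by exact Hu. apply rhs_ext; [lra |]. intros z Hz. apply Hhh_eq. lra. }
  assert (H0 : h 0 = mu * p / alp).
  { rewrite <- (Hhh_eq 0) by lra.
    apply (filterlim_locally_unique (F := at_right 0) hh).
    - apply (filterlim_filter_le_1 _ (filter_le_within _)), Hhh.
    - apply (filterlim_ext_loc (rhs F gam alp mu p hh)); [| now apply rhs_at_0].
      exists (mkposreal u0 u0_pos). intros u Hu Hu0. change (Rabs (u - 0) < u0) in Hu.
      rewrite Rminus_0_r, Rabs_right in Hu by lra.
      rewrite Hrhs by lra. symmetry. apply Hhh_eq. lra. }
  intros x. fold hh. rewrite <- extended_rhs_clamp.
  destruct (clamp_in 0 u0 x) as [C0 C1]; [lra |].
  destruct (Rle_lt_dec (clamp 0 u0 x) 0) as [Hx | Hx].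
  - replace (clamp 0 u0 x) with 0 by lra. now rewrite extended_rhs_0, H0.
  - rewrite extended_rhs_eq by lra. now apply Hrhs.
Qed.

Lemma solution_exists_unique : exists g,
  solves F gam alp mu p u0 g /\
  (forall h, solves F gam alp mu p u0 h -> forall x, 0 <= x <= u0 -> h x = g x) /\
  g 0 = mu * p / alp.
Proof.
  assert (Hk : 0 <= / 2 < 1) by lra.
  assert (Hconst : forall x : R, continuous (fun _ => mu * p / alp) x)
    by (intros; apply continuous_const).
  destruct (bounded_of_clamp_invariant
              (fun x => extended_rhs (fun _ => mu * p / alp) x - mu * p / alp) 0 u0)
    as [D0 HD0]; [lra | | |].
  { intros x. apply (continuous_minus (V := R_NormedModule));
      [now apply continuous_extended_rhs | apply continuous_const]. }
  { intros x. now rewrite extended_rhs_clamp. }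
  destruct (contraction_fixed_point_exists extended_rhs (/ 2) Hk continuous_extended_rhs
              extended_rhs_contraction _ D0 Hconst HD0) as [g [Hg Hfix]].
  assert (Hginv : forall x, g x = g (clamp 0 u0 x))
    by (intros x; now rewrite <- !Hfix, extended_rhs_clamp).
  exists g. split; [split |split].
  - apply continuous_on_closed_of_continuous. intros; apply Hg.
  - intros u Hu. now rewrite <- Hfix, extended_rhs_eq.
  - intros h Hh x Hx.
    pose (hh y := h (clamp 0 u0 y)).
    assert (Hhh : forall x, continuous hh x)
      by (intros y; apply continuous_clamp_comp; [lra | apply Hh]).
    destruct (bounded_of_clamp_invariant (fun y => hh y - g y) 0 u0) as [D HD]; [lra | | |].
    { intros y. now apply (continuous_minus (V := R_NormedModule)). }
    { intros y. unfold hh. rewrite (clamp_id 0 u0 (clamp 0 u0 y)), <- Hginv; [reflexivity |].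
      apply clamp_in. lra. }
    transitivity (hh x); [unfold hh; now rewrite clamp_id |].
    apply (contraction_fixed_point_unique extended_rhs (/ 2) Hk extended_rhs_contraction hh g D);
      auto.
    apply extended_rhs_fixed_of_solves, Hh.
  - now rewrite <- Hfix, extended_rhs_0.
Qed.

End IntegralOperator.

Lemma positive_rv_cdf_range (F : R -> R) : positive_rv_cdf F -> forall x, 0 <= F x <= 1.
Proof.
  intros [[Hmono [_ [_ Hinf]]] Hneg] x. split.
  - rewrite <- (Hneg (Rmin x 0 - 1)) by (pose proof (Rmin_r x 0); lra).
    apply Hmono. pose proof (Rmin_l x 0). lra.
  - apply Rnot_lt_le. intros Hx.
    destruct (proj1 (filterlim_locally F 1) Hinf (mkposreal (F x - 1) ltac:(simpl; lra))) as [M HM].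
    specialize (HM (Rmax x M + 1) ltac:(pose proof (Rmax_r x M); lra)).
    change (Rabs (F (Rmax x M + 1) - 1) < F x - 1) in HM.
    assert (F x <= F (Rmax x M + 1)) by (apply Hmono; pose proof (Rmax_l x M); lra).
    apply Rabs_lt_between in HM. lra.
Qed.

Lemma small_radius_exists (gam alp mu : R) : 0 < alp -> 0 < mu ->
  exists u0, 0 < u0 /\ Rabs gam * u0 <= alp / 2 /\ 4 * mu * u0 <= alp.
Proof.
  intros Halp Hmu. pose proof (Rabs_pos gam).
  exists (Rmin (alp / (2 * (Rabs gam + 1))) (alp / (4 * mu))). split; [| split].
  - apply Rmin_pos; apply Rdiv_lt_0_compat; lra.
  - apply Rle_trans with (Rabs gam * (alp / (2 * (Rabs gam + 1)))).
    + apply Rmult_le_compat_l, Rmin_l; lra.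
    + apply (Rmult_le_reg_r (2 * (Rabs gam + 1))); [lra |]. field_simplify; nra.
  - apply Rle_trans with (4 * mu * (alp / (4 * mu))); [apply Rmult_le_compat_l, Rmin_r; lra |].
    right. field. lra.
Qed.

Theorem lemma1 (F : R -> R) (kappa a r sigma c lambda : R)
  (HF : positive_rv_cdf F)
  (HA1 : F 0 = 0)
  (Hkappa : 0 < kappa <= 1) (Hr : 0 <= r) (Hsigma : 0 < sigma)
  (Hc : 0 < c) (Hlambda : 0 < lambda) :
  forall p : R, 0 < p ->
  exists u0 : R, 0 < u0 /\
    exists g : R -> R,
      solves F (gamma_ kappa a r sigma) (alpha_ kappa sigma c)
             (mu_ kappa sigma lambda) p u0 g /\
      (forall h : R -> R,
         solves F (gamma_ kappa a r sigma) (alpha_ kappa sigma c)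
                (mu_ kappa sigma lambda) p u0 h ->
         forall x, 0 <= x <= u0 -> h x = g x) /\
      g 0 = lambda * p / c.
Proof.
  intros p _.
  set (gam := gamma_ kappa a r sigma). set (alp := alpha_ kappa sigma c).
  set (mu := mu_ kappa sigma lambda).
  assert (Hks : 0 < kappa ^ 2 * sigma ^ 2) by (apply Rmult_lt_0_compat; apply pow_lt; lra).
  assert (Halp : 0 < alp) by (apply Rdiv_lt_0_compat; lra).
  assert (Hmu : 0 < mu) by (apply Rdiv_lt_0_compat; lra).
  destruct (small_radius_exists gam alp mu Halp Hmu) as [u0 [Hu0 [Hu0g Hu0m]]].
  assert (HFr0 := proj1 (proj2 (proj1 HF)) 0). rewrite HA1 in HFr0.
  destruct (solution_exists_unique F gam alp mu p u0 (proj1 (proj1 HF))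
              (positive_rv_cdf_range F HF) HFr0 Halp (Rlt_le _ _ Hmu) Hu0 Hu0g Hu0m)
    as [g Hg].
  exists u0. split; [exact Hu0 |]. exists g.
  replace (lambda * p / c) with (mu * p / alp) by (unfold mu, alp, mu_, alpha_; field; lra).
  exact Hg.
Qed.
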